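(* Assume the standing assumptions (a)–(d) below, and let $T\in(0,\infty)$, $\epsilon\in[0,\infty)$ satisfy $(L+2\epsilon\tilde L)T^2\le 1/4$ and $\epsilon\tilde L\le K/3$. Let $\bar\mu,\bar\mu'$ be probability measures on $\mathbb{R}^d$ and $\bar x,\bar x',\bar v,\bar v'\in\mathbb{R}^d$; let $(\bar x_t,\bar v_t)=(\bar q_t,\bar p_t)(\bar x,\bar v,\bar\mu)$ and $(\bar x'_t,\bar v'_t)=(\bar q_t,\bar p_t)(\bar x',\bar v',\bar\mu')$ be solutions of the distribution-dependent Hamiltonian dynamics. If $\bar v=\bar v'$, then for every family $(\kappa_s)_{0\le s\le T}$ where $\kappa_s$ is a coupling of $\bar\mu_s$ and $\bar\mu'_s$, $$|\bar x_T-\bar x'_T|^2\le\big(1-\tfrac5{12}KT^2\big)|\bar x-\bar x'|^2+\epsilon^2\tilde L^2T^4\Big(\frac76+\frac{3}{2KT^2}\Big)\max_{s\le T}\Big(\int|y-y'|\kappa_s(\mathrm{d}y\,\mathrm{d}y')\Big)^2+\hat CT^2,$$ where $\hat C=(2L+K)\mathcal R^2$.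
   Context: Standing assumptions: $V:\mathbb{R}^d\to\mathbb{R}$, $W:\mathbb{R}^d\times\mathbb{R}^d\to\mathbb{R}$ are $C^1$, $\nabla_1W$ the gradient in the first argument, constants $L>0,K>0,\mathcal R\ge0,\tilde L\ge0$ with: (a) $V(0)=0$, $V\ge0$; (b) $|\nabla V(x)-\nabla V(y)|\le L|x-y|$; (c) $\langle x-y,\nabla V(x)-\nabla V(y)\rangle\ge K|x-y|^2+L^{-1}|\nabla V(x)-\nabla V(y)|^2$ whenever $|x-y|\ge\mathcal R$; (d) $W$ symmetric, $|\nabla_1W(x,y)-\nabla_1W(\tilde x,\tilde y)|\le\tilde L(|x-\tilde x|+|y-\tilde y|)$. Distribution-dependent Hamiltonian dynamics: for $(x,v)\in\mathbb{R}^{2d}$ and a probability measure $\nu$, $(\bar q_t,\bar p_t)(x,v,\nu)$ solves $\dot{\bar q}_t=\bar p_t$, $\dot{\bar p}_t=-\nabla V(\bar q_t)-\epsilon\int\nabla_1W(\bar q_t,u)\nu_t(\mathrm{d}u)$, $(\bar q_0,\bar p_0)=(x,v)$, where $\nu_t=\mathrm{Law}(\bar q_t(\tilde x,\tilde v,\nu))$, $(\tilde x,\tilde v)\sim\nu\otimes\mathcal N(0,I_d)$. Thus $\bar\mu_s,\bar\mu'_s$ are these time-$s$ laws for $\nu=\bar\mu,\bar\mu'$. *)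

(* R^d is represented by [d.-tuple R], which carries
   the product (= Borel) sigma-algebra of MathComp-Analysis. *)
From HB Require Import structures.
From mathcomp Require Import all_boot all_order all_algebra.
From mathcomp Require Import all_classical all_reals all_analysis.
Set Implicit Arguments. Unset Strict Implicit. Unset Printing Implicit Defensive.
Import Order.TTheory GRing.Theory Num.Theory.
Import numFieldNormedType.Exports.
Local Open Scope classical_set_scope.
Local Open Scope ring_scope.

Section Vec.
Context {R : realType} {d : nat}.
Notation vec := (d.-tuple R).

Definition vzero : vec := [tuple (0 : R) | i < d].
Definition vadd (x y : vec) : vec := [tuple tnth x i + tnth y i | i < d].
Definition vsub (x y : vec) : vec := [tuple tnth x i - tnth y i | i < d].
Definition vscale (a : R) (x : vec) : vec := [tuple a * tnth x i | i < d].
Definition vdot (x y : vec) : R := \sum_(i < d) tnth x i * tnth y i.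
Definition vnorm (x : vec) : R := Num.sqrt (vdot x x).

(* G is the gradient of the C^1 function F : R^d -> R
   (directional derivatives given by <G x, h>; continuity of G is
    imposed separately, here it follows from the Lipschitz assumptions). *)
Definition is_gradient (F : vec -> R) (G : vec -> vec) : Prop :=
  forall x h : vec, is_derive (0 : R) (1 : R) (fun t => F (vadd x (vscale t h))) (vdot (G x) h).

Definition is_gradient1 (W : vec -> vec -> R) (G1 : vec -> vec -> vec) : Prop :=
  forall y, is_gradient (fun x => W x y) (fun x => G1 x y).

Definition std_gaussian (g : probability vec R) : Prop :=
  forall A : 'I_d -> set R, (forall i, measurable (A i)) ->
    g [set x : vec | forall i, A i (tnth x i)] = (\prod_(i < d) normal_prob 0 1 (A i))%E.

Definition interaction (G1 : vec -> vec -> vec) (nu : probability vec R) (q : vec) : vec :=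
  [tuple Rintegral nu setT (fun u => tnth (G1 q u) i) | i < d].

(* (Q, P) : [0,oo) -> R^d x R^d solves
      dQ/dt = P,  dP/dt = - gradV(Q) - eps \int G1(Q,u) nu_t(du),  (Q,P)(0) = (x,v)
   (componentwise derivatives for t > 0, right-continuity at 0; the interaction
   integrand is required to be integrable so that the ODE makes sense). *)
Definition solves_ham (gradV : vec -> vec) (G1 : vec -> vec -> vec) (eps : R)
    (nut : R -> probability vec R) (x v : vec) (Q P : R -> vec) : Prop :=
  Q 0 = x /\ P 0 = v /\
  (forall i, tnth (Q t) i @[t --> 0^'+] --> tnth x i) /\
  (forall i, tnth (P t) i @[t --> 0^'+] --> tnth v i) /\
  (forall t : R, 0 <= t -> forall i,
      (nut t).-integrable setT (fun u => (tnth (G1 (Q t) u) i)%:E)) /\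
  (forall t : R, 0 < t -> forall i,
      is_derive t (1 : R) (fun s => tnth (Q s) i) (tnth (P t) i) /\
      is_derive t (1 : R) (fun s => tnth (P s) i)
        (- tnth (gradV (Q t)) i - eps * tnth (interaction G1 (nut t) (Q t)) i)).

(* The distribution-dependent Hamiltonian dynamics started from nu:
   Qf x v t, Pf x v t = (qbar_t, pbar_t)(x, v, nu), and nut t = nu_t is the law of
   qbar_t(x~, v~, nu) for (x~, v~) ~ nu (x) gamma, gamma = N(0, I_d). *)
Definition dd_hamiltonian (gradV : vec -> vec) (G1 : vec -> vec -> vec) (eps : R)
    (gamma : probability vec R) (nu : probability vec R)
    (Qf Pf : vec -> vec -> R -> vec) (nut : R -> probability vec R) : Prop :=
  (forall x v, solves_ham gradV G1 eps nut x v (Qf x v) (Pf x v)) /\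
  (forall t : R, 0 <= t -> forall A : set vec, measurable A ->
     nut t A = (nu \x gamma)%E [set z : vec * vec | A (Qf z.1 z.2 t)]).

Definition is_coupling (kappa : probability (vec * vec)%type R) (mu mu' : probability vec R) : Prop :=
  forall A : set vec, measurable A ->
    kappa (A `*` setT) = mu A /\ kappa (setT `*` A) = mu' A.

(* sup_{0 <= s <= T} \int |y - y'| kappa_s(dy dy')  (extended real; the paper's max) *)
Definition sup_coupling_cost (kappa : R -> probability (vec * vec)%type R) (T : R) : \bar R :=
  ereal_sup [set (\int[kappa s]_z (vnorm (vsub z.1 z.2))%:E)%E | s in `[0, T]].

End Vec.

From HB Require Import structures.
From mathcomp Require Import all_boot all_order all_algebra.
From mathcomp Require Import all_classical all_reals all_analysis.
From mathcomp Require Import ring lra.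
From mathcomp Require Import measurable_realfun.
Set Implicit Arguments. Unset Strict Implicit. Unset Printing Implicit Defensive.
Import Order.TTheory GRing.Theory Num.Theory.
Import numFieldNormedType.Exports.
Local Open Scope classical_set_scope.
Local Open Scope ring_scope.

(* Write z = x_t - x'_t and w = v_t - v'_t, so that w_0 = 0 and w' is the difference of
   the forces.  With s = T - t the remaining time, the Lyapunov function
   |z + s w|^2 + (2/T^2) s^4 |w|^2 equals |x - x'|^2 at t = 0 and |x_T - x'_T|^2 at t = T.
   Its time derivative is 2 s times a drift term which, using the dissipativity of grad V
   outside the ball of radius Rc, the Lipschitz bounds, the couplings kappa_s to compare
   the interaction terms, and Young's inequality, is at most B - (11/25) K times the
   Lyapunov function, where B = (2L + K) Rc^2 + (eps Lt M)^2 (7 T^2/6 + 3/(2K)) and M bounds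
   the coupling costs.  A comparison argument on [0, T] gives
   (1 + 11/25 K T^2) |x_T - x'_T|^2 <= |x - x'|^2 + (1 + 11/25 K T^2) B T^2, and
   1 / (1 + 11/25 X) <= 1 - 5/12 X for X = K T^2 <= 1/16 concludes. *)

Lemma mulr_young (R : realFieldType) (x y c : R) :
  0 < c -> x * y <= c * x ^+ 2 + y ^+ 2 / (4 * c).
Proof.
move=> c0; rewrite -subr_ge0.
have -> : c * x ^+ 2 + y ^+ 2 / (4 * c) - x * y = (2 * c * x - y) ^+ 2 / (4 * c).
  by field; lra.
by rewrite divr_ge0 ?sqr_ge0 //; lra.
Qed.

Arguments mulr_young {R} x y c.

Section Euclid.
Context {R : realType} {d : nat}.
Notation vec := (d.-tuple R).
Implicit Types (x y z : vec) (a : R).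

Lemma tnth_vsub x y i : tnth (vsub x y) i = tnth x i - tnth y i.
Proof. exact: tnth_mktuple. Qed.

Lemma tnth_vscale a x i : tnth (vscale a x) i = a * tnth x i.
Proof. exact: tnth_mktuple. Qed.

Lemma vsubxx x : vsub x x = vzero.
Proof. by apply: eq_from_tnth => i; rewrite tnth_vsub !tnth_mktuple subrr. Qed.

Lemma vdotC x y : vdot x y = vdot y x.
Proof. by apply: eq_bigr => i _; rewrite mulrC. Qed.

Lemma vdot0r x : vdot x vzero = 0.
Proof. by rewrite /vdot big1 // => i _; rewrite tnth_mktuple mulr0. Qed.

Lemma vdotBr x y z : vdot x (vsub y z) = vdot x y - vdot x z.
Proof. by rewrite /vdot -sumrB; apply: eq_bigr => i _; rewrite tnth_vsub mulrBr. Qed.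

Lemma vdotZr a x y : vdot x (vscale a y) = a * vdot x y.
Proof. by rewrite /vdot mulr_sumr; apply: eq_bigr => i _; rewrite tnth_vscale mulrCA. Qed.

Lemma vdotxx_ge0 x : 0 <= vdot x x.
Proof. by apply: sumr_ge0 => i _; rewrite -expr2 sqr_ge0. Qed.

Lemma vnorm_ge0 x : 0 <= vnorm x.
Proof. exact: sqrtr_ge0. Qed.

Lemma vnorm_sqr x : vnorm x ^+ 2 = vdot x x.
Proof. by rewrite sqr_sqrtr // vdotxx_ge0. Qed.

Lemma vnorm_dim0 x : d = 0%N -> vnorm x = 0.
Proof.
move=> d0; rewrite /vnorm /vdot big1 ?sqrtr0 // => i.
by move: (ltn_ord i); rewrite {2}d0.
Qed.

(* Lagrange's identity: the defect in Cauchy-Schwarz is a sum of squares. *)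
Lemma vdot_sqr_le x y : vdot x y ^+ 2 <= vdot x x * vdot y y.
Proof.
have sum_mul (a b : 'I_d -> R) : (\sum_i a i) * (\sum_j b j) = \sum_i \sum_j a i * b j.
  by rewrite mulr_suml; apply: eq_bigr => i _; rewrite mulr_sumr.
pose D := \sum_i \sum_j (tnth x i * tnth y j - tnth x j * tnth y i) ^+ 2.
have D0 : 0 <= D by apply: sumr_ge0 => i _; apply: sumr_ge0 => j _; exact: sqr_ge0.
have eD : D = \sum_i \sum_j (tnth x i * tnth x i) * (tnth y j * tnth y j)
            + \sum_j \sum_i (tnth x j * tnth x j) * (tnth y i * tnth y i)
            - 2 * \sum_i \sum_j (tnth x i * tnth y i) * (tnth x j * tnth y j).
  rewrite [X in _ + X - _]exchange_big mulr_sumr -big_split -sumrB /=.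
  apply: eq_bigr => i _; rewrite mulr_sumr -big_split -sumrB /=.
  by apply: eq_bigr => j _; ring.
rewrite eD -!sum_mul -/(vdot x x) -/(vdot y y) -/(vdot x y) in D0.
lra.
Qed.

Lemma ler_abs_vdot x y : `|vdot x y| <= vnorm x * vnorm y.
Proof.
rewrite /vnorm -sqrtrM ?vdotxx_ge0 // -sqrtr_sqr.
by rewrite ler_sqrt ?vdot_sqr_le // mulr_ge0 // vdotxx_ge0.
Qed.

Lemma vdot_le x y : vdot x y <= vnorm x * vnorm y.
Proof. exact: le_trans (ler_norm _) (ler_abs_vdot x y). Qed.

Lemma oppr_vdot_le x y : - vdot x y <= vnorm x * vnorm y.
Proof. by apply: le_trans (ler_abs_vdot x y); rewrite -normrN ler_norm. Qed.

End Euclid.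

Section Dissipativity.
Context {R : realType} {d : nat}.
Notation vec := (d.-tuple R).
Variables (gradV : vec -> vec) (L K Rc : R).
Hypothesis gradV_lipschitz :
  forall x y, vnorm (vsub (gradV x) (gradV y)) <= L * vnorm (vsub x y).
Hypothesis gradV_monotone_far : forall x y, Rc <= vnorm (vsub x y) ->
  K * vnorm (vsub x y) ^+ 2 + L^-1 * vnorm (vsub (gradV x) (gradV y)) ^+ 2
    <= vdot (vsub x y) (vsub (gradV x) (gradV y)).

(* Inside the ball of radius Rc, Lipschitz continuity costs at most (2L + K) Rc^2. *)
Lemma gradV_dissipative x y : 0 < L -> 0 < K ->
  - vdot (vsub x y) (vsub (gradV x) (gradV y)) <=
    - K * vnorm (vsub x y) ^+ 2 - vnorm (vsub (gradV x) (gradV y)) ^+ 2 / L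
    + (2 * L + K) * Rc ^+ 2.
Proof.
move=> L0 K0.
have := gradV_lipschitz x y; have := gradV_monotone_far (x := x) (y := y).
have := oppr_vdot_le (vsub x y) (vsub (gradV x) (gradV y)).
have nz0 := vnorm_ge0 (vsub x y); have ng0 := vnorm_ge0 (vsub (gradV x) (gradV y)).
set nz := vnorm (vsub x y) in nz0 *; set ng := vnorm _ in ng0 *; set a := vdot _ _.
move=> hcs hfar hlip.
have [Rnz|nzR] := lerP Rc nz.
  have := hfar Rnz; rewrite (mulrC L^-1).
  have : 0 <= (2 * L + K) * Rc ^+ 2 by rewrite mulr_ge0 ?sqr_ge0 //; lra.
  lra.
have h1 : nz * ng <= L * nz ^+ 2 by rewrite expr2 mulrCA ler_wpM2l.
have h2 : ng ^+ 2 / L <= L * nz ^+ 2.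
  rewrite ler_pdivrMr // (_ : L * nz ^+ 2 * L = (L * nz) ^+ 2); last by ring.
  by rewrite ler_pXn2r ?nnegrE // mulr_ge0 // ltW.
have h3 : nz ^+ 2 <= Rc ^+ 2 by rewrite ler_pXn2r ?nnegrE //; lra.
have h4 : (2 * L + K) * nz ^+ 2 <= (2 * L + K) * Rc ^+ 2 by rewrite ler_wpM2l //; lra.
lra.
Qed.

(* Far-field monotonicity at a pair at distance > Rc gives
   K |z|^2 <= <z, g> - |g|^2 / L <= L |z|^2 / 4; such a pair exists only if d > 0. *)
Lemma K_le_quarter_L : 0 < L -> 0 < K -> 0 <= Rc -> (0 < d)%N -> K <= L / 4.
Proof.
move=> L0 K0 Rc0 d_gt0.
pose y : vec := [tuple Rc + 1 | i < d].
have far : Rc + 1 <= vnorm (vsub y vzero).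
  rewrite /vnorm -[X in X <= _]ger0_norm ?addr_ge0 // -sqrtr_sqr ler_sqrt ?vdotxx_ge0 //.
  rewrite /vdot (bigD1 (Ordinal d_gt0)) //= tnth_vsub !tnth_mktuple subr0 -expr2 lerDl.
  by apply: sumr_ge0 => i _; rewrite -expr2 sqr_ge0.
have := gradV_monotone_far (x := y) (y := vzero) ltac:(lra).
have := vdot_le (vsub y vzero) (vsub (gradV y) (gradV vzero)).
have := mulr_young (vnorm (vsub y vzero)) (vnorm (vsub (gradV y) (gradV vzero))) (L / 4).
set nz := vnorm (vsub y vzero) in far *; set ng := vnorm _; set a := vdot _ _.
have -> : 4 * (L / 4) = L by field.
move=> /(_ ltac:(lra)) young hcs hfar.
have : K * nz ^+ 2 <= L / 4 * nz ^+ 2 by rewrite mulrC [_ * ng ^+ 2]mulrC in hfar; lra.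
by rewrite ler_pM2r // exprn_gt0 //; lra.
Qed.

End Dissipativity.

Section Integrals.
Context {R : realType}.

Lemma Rintegral_sum dT (T : measurableType dT) (mu : {measure set T -> \bar R})
    (D : set T) (I : Type) (s : seq I) (f : I -> T -> R) :
  measurable D -> (forall i, mu.-integrable D (EFin \o f i)) ->
  \int[mu]_(x in D) (\sum_(i <- s) f i x) = \sum_(i <- s) \int[mu]_(x in D) f i x.
Proof.
move=> mD intf; rewrite /Rintegral sum_fine => [|i _]; last exact: integrable_fin_num (intf i).
congr fine; rewrite -integral_sum //.
by apply: eq_integral => x _; rewrite sumEFin.
Qed.

Lemma Rintegral_pushforward dX dY (X : measurableType dX) (Y : measurableType dY)
    (k : {measure set X -> \bar R}) (mu : {measure set Y -> \bar R})
    (phi : X -> Y) (g : Y -> R) :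
  measurable_fun setT phi ->
  (forall A, measurable A -> mu A = pushforward k phi A) ->
  mu.-integrable setT (EFin \o g) ->
  k.-integrable setT (EFin \o (g \o phi)) /\
  \int[mu]_y g y = \int[k]_x g (phi x).
Proof.
move=> mphi mu_push intg.
have mu_push' A : measurable A -> A `<=` setT -> mu A = pushforward k phi A.
  by move=> mA _; exact: mu_push.
have mEg : measurable_fun setT (EFin \o g) by case/integrableP: intg.
have intk : k.-integrable setT (EFin \o (g \o phi)).
  apply/integrableP; split; first exact: measurableT_comp mEg mphi.
  case/integrableP: intg => _; rewrite (eq_measure_integral _ mu_push').
  by rewrite ge0_integral_pushforward //; exact: measurableT_comp.
split=> //.
by rewrite /Rintegral (eq_measure_integral _ mu_push') integral_pushforward.
Qed.

End Integrals.

Section Couplings.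
Context {R : realType} {d : nat}.
Notation vec := (d.-tuple R).

(* Test the integral against its own value and use Cauchy-Schwarz under the integral. *)
Lemma vnorm_Rintegral_le dT (T : measurableType dT) (k : {measure set T -> \bar R})
    (F : T -> vec) (h : T -> R) :
  (forall i, k.-integrable setT (EFin \o (fun p => tnth (F p) i))) ->
  k.-integrable setT (EFin \o h) ->
  (forall p, vnorm (F p) <= h p) ->
  vnorm [tuple \int[k]_p tnth (F p) i | i < d] <= \int[k]_p h p.
Proof.
move=> intF inth Fh.
set e := [tuple _ | i < d].
have intZ (c : R) i : k.-integrable setT (EFin \o (fun p => c * tnth (F p) i)).
  by apply: eq_integrable (integrableZl measurableT c (intF i)) => // p _ /=; rewrite EFinM.
have ee : vdot e e <= vnorm e * \int[k]_p h p.
  have -> : vdot e e = \int[k]_p vdot e (F p).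
    rewrite Rintegral_sum //; apply: eq_bigr => i _.
    by rewrite RintegralZl // tnth_mktuple.
  rewrite -RintegralZl //; apply: le_Rintegral => //.
  - have -> : EFin \o (fun p => vdot e (F p)) =
        (fun p => \sum_i (EFin \o (fun p => tnth e i * tnth (F p) i)) p).
      by apply/funext => p /=; rewrite sumEFin.
    by apply: integrable_sum => // i; exact: intZ.
  - by apply: eq_integrable (integrableZl measurableT (vnorm e) inth) => //.
  - by move=> p _; apply: le_trans (vdot_le _ _) _; rewrite ler_wpM2l ?vnorm_ge0.
have [e0|e_neq0] := eqVneq (vnorm e) 0.
  by rewrite e0; apply: Rintegral_ge0 => p _; exact: le_trans (vnorm_ge0 _) (Fh p).
rewrite -vnorm_sqr expr2 in ee.
by rewrite -(ler_pM2l (_ : 0 < vnorm e)) // lt0r e_neq0 vnorm_ge0.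
Qed.

Lemma coupling_fst_pushforward (k : probability (vec * vec)%type R) (mu1 mu2 : probability vec R) :
  is_coupling k mu1 mu2 -> forall A, measurable A -> mu1 A = pushforward k fst A.
Proof.
move=> cpl A mA; rewrite /pushforward -(cpl A mA).1.
by congr (k _); apply/seteqP; split=> [[]|[]] //= ? ? [].
Qed.

Lemma coupling_snd_pushforward (k : probability (vec * vec)%type R) (mu1 mu2 : probability vec R) :
  is_coupling k mu1 mu2 -> forall A, measurable A -> mu2 A = pushforward k snd A.
Proof.
move=> cpl A mA; rewrite /pushforward -(cpl A mA).2.
by congr (k _); apply/seteqP; split=> [[]|[]] //= ? ? [].
Qed.

Lemma interaction_sub_le_Rintegral (k : probability (vec * vec)%type R)
    (mu1 mu2 : probability vec R) (G1 : vec -> vec -> vec) (q q' : vec) (h : vec * vec -> R) :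
  is_coupling k mu1 mu2 ->
  (forall i, mu1.-integrable setT (fun u => (tnth (G1 q u) i)%:E)) ->
  (forall i, mu2.-integrable setT (fun u => (tnth (G1 q' u) i)%:E)) ->
  k.-integrable setT (EFin \o h) ->
  (forall p, vnorm (vsub (G1 q p.1) (G1 q' p.2)) <= h p) ->
  vnorm (vsub (interaction G1 mu1 q) (interaction G1 mu2 q')) <= \int[k]_p h p.
Proof.
move=> cpl int1 int2 inth Gh.
have tr1 i := Rintegral_pushforward (g := fun u => tnth (G1 q u) i)
  measurable_fst (coupling_fst_pushforward cpl) (int1 i).
have tr2 i := Rintegral_pushforward (g := fun u => tnth (G1 q' u) i)
  measurable_snd (coupling_snd_pushforward cpl) (int2 i).
have intG i : k.-integrable setT
    (EFin \o (fun p => tnth (vsub (G1 q p.1) (G1 q' p.2)) i)).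
  apply: eq_integrable (integrableB measurableT (tr1 i).1 (tr2 i).1) => // p _ /=.
  by rewrite tnth_vsub EFinB.
have -> : vsub (interaction G1 mu1 q) (interaction G1 mu2 q') =
    [tuple \int[k]_p tnth (vsub (G1 q p.1) (G1 q' p.2)) i | i < d].
  apply: eq_from_tnth => i; rewrite tnth_vsub !tnth_mktuple (tr1 i).2 (tr2 i).2.
  under [RHS]eq_Rintegral do rewrite tnth_vsub.
  by rewrite RintegralB //; [exact: (tr1 i).1 | exact: (tr2 i).1].
exact: vnorm_Rintegral_le.
Qed.

Lemma measurable_vnorm_vsub :
  measurable_fun [set: vec * vec] (fun p : vec * vec => vnorm (vsub p.1 p.2)).
Proof.
apply: measurableT_comp (continuous_measurable_fun (@sqrt_continuous R)) _.
apply: measurable_sum => i; apply: measurable_funM;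
  under eq_fun do rewrite tnth_vsub;
  by apply: measurable_funB; apply: measurableT_comp (measurable_tnth i) _.
Qed.

Lemma interaction_sub_le (k : probability (vec * vec)%type R)
    (mu1 mu2 : probability vec R) (G1 : vec -> vec -> vec) (q q' : vec) (Lt M : R) :
  0 <= Lt -> is_coupling k mu1 mu2 ->
  (forall i, mu1.-integrable setT (fun u => (tnth (G1 q u) i)%:E)) ->
  (forall i, mu2.-integrable setT (fun u => (tnth (G1 q' u) i)%:E)) ->
  (forall x y x' y', vnorm (vsub (G1 x y) (G1 x' y'))
                       <= Lt * (vnorm (vsub x x') + vnorm (vsub y y'))) ->
  (\int[k]_p (vnorm (vsub p.1 p.2))%:E <= M%:E)%E ->
  vnorm (vsub (interaction G1 mu1 q) (interaction G1 mu2 q')) <= Lt * (vnorm (vsub q q') + M).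
Proof.
move=> Lt0 cpl int1 int2 G1_lip costM.
have int_cost : k.-integrable setT (EFin \o (fun p : vec * vec => vnorm (vsub p.1 p.2))).
  apply/integrableP; split.
    by apply/measurable_EFinP; exact: measurable_vnorm_vsub.
  rewrite (eq_integral (EFin \o (fun p => vnorm (vsub p.1 p.2)))) => [|p _].
    exact: le_lt_trans costM (ltry M).
  by rewrite /= ger0_norm ?vnorm_ge0.
have int_cst (c : R) : k.-integrable setT (EFin \o (fun _ : vec * vec => c)).
  exact: finite_measure_integrable_cst.
pose h (p : vec * vec) := Lt * vnorm (vsub q q') + Lt * vnorm (vsub p.1 p.2).
have int_Lt_cost : k.-integrable setT (EFin \o (fun p => Lt * vnorm (vsub p.1 p.2))).
  by apply: eq_integrable (integrableZl measurableT Lt int_cost) => //.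
have inth : k.-integrable setT (EFin \o h).
  by apply: eq_integrable (integrableD measurableT (int_cst _) int_Lt_cost) => //.
apply: le_trans (interaction_sub_le_Rintegral cpl int1 int2 inth _) _.
  by move=> p; rewrite /h -mulrDr; exact: G1_lip.
rewrite /h RintegralD // Rintegral_cst // RintegralZl //.
have -> : fine (k [set: vec * vec]) = 1 by rewrite probability_setT.
rewrite mulr1 mulrDr lerD2l; apply: ler_wpM2l => //.
rewrite /Rintegral -lee_fin fineK //; exact: integrable_fin_num.
Qed.

Lemma interaction_sub_le0 (k : probability (vec * vec)%type R)
    (mu1 mu2 : probability vec R) (G1 : vec -> vec -> vec) (q q' : vec) :
  is_coupling k mu1 mu2 ->
  (forall i, mu1.-integrable setT (fun u => (tnth (G1 q u) i)%:E)) ->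
  (forall i, mu2.-integrable setT (fun u => (tnth (G1 q' u) i)%:E)) ->
  (forall x y x' y', vnorm (vsub (G1 x y) (G1 x' y')) <= 0) ->
  vnorm (vsub (interaction G1 mu1 q) (interaction G1 mu2 q')) <= 0.
Proof.
move=> cpl int1 int2 G1_cst.
have int0 : k.-integrable setT (EFin \o (fun _ : vec * vec => 0 : R)).
  exact: finite_measure_integrable_cst.
apply: le_trans (interaction_sub_le_Rintegral cpl int1 int2 int0 _) _ => //.
by rewrite Rintegral_cst // mul0r.
Qed.

End Couplings.

Lemma is_derive1_continuous {R : realType} (f : R -> R) (x df : R) :
  is_derive x 1 f df -> {for x, continuous f}.
Proof.
move=> fdf; apply: differentiable_continuous; apply/derivable1_diffP.
exact: (@ex_derive _ _ _ _ _ _ _ fdf).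
Qed.

Lemma is_derive_subr {R : realType} (a t : R) : is_derive t 1 (fun u => a - u) (-1).
Proof.
by apply: is_derive_eq (is_deriveB (is_derive_cst a t 1) (is_derive_id t 1)) _; rewrite sub0r.
Qed.

Lemma cvg0_subr {R : realType} (a : R) : (a - t) @[t --> (0 : R)^'+] --> a.
Proof.
by rewrite -[X in _ --> X]subr0; apply: cvgB; [exact: cvg_cst | exact/cvg_at_right_filter/cvg_id].
Qed.

Lemma cvg0_subr_exprn {R : realType} (a : R) n :
  ((a - t) ^+ n) @[t --> (0 : R)^'+] --> a ^+ n.
Proof.
have a_t := @cvg0_subr _ a.
elim: n => [|n IHn]; first exact: cvg_cst.
by under eq_cvg do rewrite exprS; rewrite exprS; exact: cvgM.
Qed.

Lemma ler0_is_derive_le {R : realType} (f df : R -> R) (b : R) : 0 < b ->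
  (forall t : R, 0 < t -> is_derive t 1 f (df t)) ->
  f t @[t --> (0 : R)^'+] --> f 0 ->
  (forall t : R, 0 < t < b -> df t <= 0) ->
  f b <= f 0.
Proof.
move=> b0 fdf f0 df_le0.
have fcont t : 0 < t -> {for t, continuous f}.
  by move=> t0; exact: is_derive1_continuous (fdf t t0).
have cf : {within `[0, b], continuous f}.
  apply/(continuous_within_itvP _ b0); split=> //.
  - by move=> t; rewrite in_itv /= => /andP[t0 _]; exact: fcont.
  - exact/cvg_at_left_filter/fcont.
have fdf' t : t \in `]0, b[ -> is_derive t 1 f (df t).
  by rewrite in_itv /= => /andP[t0 _]; exact: fdf.
have [c] := MVT b0 fdf' cf.
rewrite in_itv /= => c0b fbf0.
by rewrite -subr_le0 fbf0 subr0 mulr_le0_ge0 ?df_le0 // ltW.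
Qed.

Section Lyapunov.
Context {R : realType} {d : nat}.
Notation vec := (d.-tuple R).
Implicit Types (z w f : vec) (mu s : R).

(* |z + s w|^2 + mu s^4 |w|^2, where s will be the remaining time T - t *)
Definition lyapunov mu s z w : R :=
  vdot z z + 2 * s * vdot z w + (s ^+ 2 + mu * s ^+ 4) * vdot w w.

Definition drift mu s z w f : R :=
  vdot z f + (s + mu * s ^+ 3) * vdot w f - 2 * mu * s ^+ 2 * vdot w w.

Lemma lyapunov_ge0 mu s z w : 0 <= mu -> 0 <= s -> 0 <= lyapunov mu s z w.
Proof.
move=> mu0 s0; rewrite /lyapunov -!vnorm_sqr.
have : - (2 * s * vdot z w) <= 2 * s * (vnorm z * vnorm w).
  by rewrite -mulrN ler_wpM2l ?oppr_vdot_le // mulr_ge0.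
have := sqr_ge0 (vnorm z - s * vnorm w).
have : 0 <= mu * s ^+ 4 * vnorm w ^+ 2 by rewrite mulr_ge0 ?sqr_ge0 // mulr_ge0 // exprn_ge0.
lra.
Qed.

Lemma lyapunov_s0 mu z w : lyapunov mu 0 z w = vdot z z.
Proof. by rewrite /lyapunov; ring. Qed.

Lemma lyapunov_w0 mu s z : lyapunov mu s z vzero = vdot z z.
Proof. by rewrite /lyapunov !vdot0r; ring. Qed.

Lemma is_derive_vdot (X Y : R -> vec) (dX dY : vec) (t : R) :
  (forall i, is_derive t 1 (fun u => tnth (X u) i) (tnth dX i)) ->
  (forall i, is_derive t 1 (fun u => tnth (Y u) i) (tnth dY i)) ->
  is_derive t 1 (fun u => vdot (X u) (Y u)) (vdot dX (Y t) + vdot (X t) dY).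
Proof.
move=> hX hY; have := is_derive_sum (fun i => is_deriveM (hX i) (hY i)).
rewrite fct_sumE => hXY; apply: is_derive_eq hXY _.
by rewrite /vdot -big_split; apply: eq_bigr => i _; rewrite /GRing.scale /=; ring.
Qed.

Lemma cvg_vdot (T : Type) (F : set_system T) (FF : Filter F) (X Y : T -> vec) (x y : vec) :
  (forall i, tnth (X u) i @[u --> F] --> tnth x i) ->
  (forall i, tnth (Y u) i @[u --> F] --> tnth y i) ->
  vdot (X u) (Y u) @[u --> F] --> vdot x y.
Proof.
move=> hX hY; apply: cvg_big => //; first exact: add_continuous.
by move=> i _; exact: cvgM.
Qed.

End Lyapunov.

Section LyapunovAlongTrajectory.
Context {R : realType} {d : nat}.
Notation vec := (d.-tuple R).
Variables (T mu : R) (Z W F : R -> vec).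
Hypothesis Z'_W :
  forall t : R, 0 < t -> forall i, is_derive t 1 (fun u => tnth (Z u) i) (tnth (W t) i).
Hypothesis W'_F :
  forall t : R, 0 < t -> forall i, is_derive t 1 (fun u => tnth (W u) i) (tnth (F t) i).
Hypothesis Z_cvg0 : forall i, tnth (Z t) i @[t --> (0 : R)^'+] --> tnth (Z 0) i.
Hypothesis W_cvg0 : forall i, tnth (W t) i @[t --> (0 : R)^'+] --> tnth (W 0) i.

Let V t := lyapunov mu (T - t) (Z t) (W t).

Lemma is_derive_lyapunov (t : R) : 0 < t ->
  is_derive t 1 V (2 * (T - t) * drift mu (T - t) (Z t) (W t) (F t)).
Proof.
move=> t0.
have ds := is_derive_subr T t.
have dzz := is_derive_vdot (Z'_W t0) (Z'_W t0).
have dzw := is_derive_vdot (Z'_W t0) (W'_F t0).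
have dww := is_derive_vdot (W'_F t0) (W'_F t0).
have := is_deriveD (is_deriveD dzz (is_deriveM (is_deriveZ 2 ds) dzw))
  (is_deriveM (is_deriveD (is_deriveX 2 ds) (is_deriveZ mu (is_deriveX 4 ds))) dww).
move=> dV; apply: is_derive_eq dV _.
rewrite /drift (vdotC (W t) (Z t)) (vdotC (F t) (W t)) !fctE.
rewrite /GRing.scale /= /GRing.scale /=; ring.
Qed.

Lemma lyapunov_cvg0 : V t @[t --> (0 : R)^'+] --> V 0.
Proof.
have cvg_dot X Y := @cvg_vdot _ _ _ (0 : R)^'+ _ X Y.
rewrite /V subr0; apply: cvgD; first apply: cvgD.
- exact: cvg_dot.
- by apply: cvgM; [apply: cvgM; [exact: cvg_cst | exact: cvg0_subr] | exact: cvg_dot].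
- apply: cvgM; last exact: cvg_dot.
  by apply: cvgD; [|apply: cvgM; [exact: cvg_cst|]]; apply: cvg0_subr_exprn.
Qed.

(* U t := (1 + ka q t) V t - (1 + ka T^2) B q t, with q t := T^2 - (T - t)^2, is
   nonincreasing: U' = 2 (T - t) ((1 + ka q t) drift + ka V - (1 + ka T^2) B) <= 0. *)
Lemma lyapunov_comparison (ka B : R) : 0 < T -> 0 <= ka -> 0 <= mu -> 0 <= B ->
  W 0 = vzero ->
  (forall t, 0 < t < T -> drift mu (T - t) (Z t) (W t) (F t) + ka * V t <= B) ->
  (1 + ka * T ^+ 2) * vdot (Z T) (Z T) <=
    vdot (Z 0) (Z 0) + (1 + ka * T ^+ 2) * (B * T ^+ 2).
Proof.
move=> T0 ka0 mu0 B0 W0 drift_le.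
pose q t := T ^+ 2 - (T - t) ^+ 2.
have dq (t : R) : is_derive t 1 q (2 * (T - t)).
  apply: is_derive_eq (is_deriveB (is_derive_cst _ t 1) (is_deriveX 2 (is_derive_subr T t))) _.
  by rewrite /GRing.scale /=; ring.
pose E t := 1 + ka * q t.
pose c := (1 + ka * T ^+ 2) * B.
pose U t := E t * V t - c * q t.
have dU (t : R) : 0 < t -> is_derive t 1 U
    (2 * (T - t) * (E t * drift mu (T - t) (Z t) (W t) (F t) + ka * V t - c)).
  move=> t0; have dE := is_deriveD (is_derive_cst (1 : R) t 1) (is_deriveZ ka (dq t)).
  apply: is_derive_eq (is_deriveB (is_deriveM dE (is_derive_lyapunov t0)) (is_deriveZ c (dq t))) _.
  by rewrite /E !fctE /GRing.scale /= /GRing.scale /=; ring.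
have UT : U T = (1 + ka * T ^+ 2) * vdot (Z T) (Z T) - c * T ^+ 2.
  by rewrite /U /E /q /V subrr lyapunov_s0; congr (_ * _ - _ * _); ring.
have U0 : U 0 = vdot (Z 0) (Z 0).
  by rewrite /U /E /q /V W0 lyapunov_w0 subr0 subrr mulr0 addr0 mul1r mulr0 subr0.
suff : U T <= U 0 by rewrite UT U0 /c -mulrA; lra.
apply: ler0_is_derive_le T0 dU _ _.
  have q_cvg0 : q t @[t --> (0 : R)^'+] --> q 0.
    by rewrite /q subr0; apply: cvgB; [exact: cvg_cst | exact: cvg0_subr_exprn].
  apply: cvgB; last by apply: cvgM; [exact: cvg_cst | exact: q_cvg0].
  apply: cvgM; last exact: lyapunov_cvg0.
  by apply: cvgD; [exact: cvg_cst | apply: cvgM; [exact: cvg_cst | exact: q_cvg0]].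
move=> t /andP[t0 tT].
have V0 : 0 <= V t by apply: lyapunov_ge0 => //; lra.
have q0 : 0 <= q t.
  by rewrite /q (_ : _ - _ = t * (2 * T - t)); [apply: mulr_ge0; lra | ring].
have qT : q t <= T ^+ 2 by rewrite /q lerBlDr lerDl sqr_ge0.
have E1 : 1 <= E t by rewrite /E lerDl mulr_ge0.
have ET : E t <= 1 + ka * T ^+ 2 by rewrite /E lerD2l ler_wpM2l.
rewrite pmulr_rle0 ?mulr_gt0 ?subr_gt0 // /c.
have := drift_le t ltac:(lra); rewrite -lerBrDr => hdrift.
have := ler_wpM2l (ltW (lt_le_trans ltr01 E1)) hdrift.
have : 0 <= (E t - 1) * (ka * V t) by rewrite mulr_ge0 ?subr_ge0 ?mulr_ge0.
have := ler_wpM2r B0 ET.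
lra.
Qed.

End LyapunovAlongTrajectory.

Lemma cross_term_le {R : realType} (m u a b : R) : 0 <= m <= 2 -> 0 <= u -> 0 <= a ->
  (1 + m) * u * (a + b) <= 5 / 2 * u ^+ 2 + 9 / 2 * a ^+ 2 + 7 / 6 * b ^+ 2.
Proof.
move=> /andP[m0 m2] u0 a0.
have half : 0 < 1 / 2 :> R by [].
have ya := mulr_young u (3 * a) _ half.
have yb := mulr_young u b _ half.
have ymb := mulr_young u (m * b) (3 / 2) ltac:(lra).
have m_sqr : m ^+ 2 <= 4 by rewrite (_ : 4 = 2 ^+ 2) ?ler_pXn2r ?nnegrE //; lra.
have : (1 + m) * (u * a) <= 3 * (u * a) by rewrite ler_wpM2r ?mulr_ge0 //; lra.
have : m ^+ 2 * b ^+ 2 <= 4 * b ^+ 2 by rewrite ler_wpM2r ?sqr_ge0.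
nra.
Qed.

Section DriftEstimate.
Context {R : realType} {d : nat}.
Notation vec := (d.-tuple R).

Definition force (eps : R) (g e : vec) : vec := vsub (vscale (-1) g) (vscale eps e).

Lemma drift_force_le (K L T be eps s M C : R) (z w g e : vec) :
  0 <= s -> 0 <= eps ->
  - vdot z g <= - K * vnorm z ^+ 2 - vnorm g ^+ 2 / L + C ->
  eps * vnorm e <= be * (vnorm z + M) ->
  drift (2 / T ^+ 2) s z w (force eps g e) <=
    - K * vnorm z ^+ 2 - vnorm g ^+ 2 / L + C + vnorm z * (be * (vnorm z + M))
    + (1 + 2 / T ^+ 2 * s ^+ 2) * (s * vnorm w) * (vnorm g + be * (vnorm z + M))
    - 4 * (s * vnorm w) ^+ 2 / T ^+ 2.
Proof.
move=> s0 eps0 hzg hne.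
have epsN_le x : - (eps * vdot x e) <= vnorm x * (be * (vnorm z + M)).
  rewrite -mulrN; apply: le_trans (ler_wpM2l eps0 (oppr_vdot_le x e)) _.
  by rewrite mulrCA; exact: ler_wpM2l (vnorm_ge0 x) _ _ hne.
have hw : -1 * vdot w g - eps * vdot w e <= vnorm w * (vnorm g + be * (vnorm z + M)).
  by rewrite mulN1r mulrDr; apply: lerD; [exact: oppr_vdot_le | exact: epsN_le].
have r0 : 0 <= s + 2 / T ^+ 2 * s ^+ 3.
  have : 0 <= 2 / T ^+ 2 by rewrite divr_ge0 ?sqr_ge0 //; lra.
  by move=> ?; rewrite addr_ge0 // mulr_ge0 ?exprn_ge0.
rewrite /drift /force !vdotBr !vdotZr -vnorm_sqr mulN1r.
have := ler_wpM2l r0 hw; have := epsN_le z.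
set X := be * _ in hne hw *.
move=> hz hw'.
rewrite (_ : (1 + 2 / T ^+ 2 * s ^+ 2) * (s * vnorm w) * (vnorm g + X)
  = (s + 2 / T ^+ 2 * s ^+ 3) * (vnorm w * (vnorm g + X))); last by ring.
rewrite (_ : 4 * (s * vnorm w) ^+ 2 / T ^+ 2 = 2 * (2 / T ^+ 2) * s ^+ 2 * vnorm w ^+ 2).
  by lra.
by ring.
Qed.

Lemma lyapunov_le (mu s : R) (z w : vec) : 0 <= s ->
  lyapunov mu s z w <= 17 / 16 * vnorm z ^+ 2 + (17 + mu * s ^+ 2) * (s * vnorm w) ^+ 2.
Proof.
move=> s0; rewrite /lyapunov -!vnorm_sqr.
have : 2 * s * vdot z w <= 2 * (vnorm z * (s * vnorm w)).
  by rewrite -mulrA ler_wpM2l // mulrCA ler_wpM2l ?vdot_le.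
have := mulr_young (vnorm z) (s * vnorm w) (1 / 32) ltac:(lra).
lra.
Qed.

(* The weight 11/25 K of the Lyapunov function is what the dissipation -K|z|^2 can afford
   once the interaction and cross terms are absorbed; y stands for s |w|. *)
Lemma drift_scalar_le (K L T be M C nz ng y m : R) :
  0 < K -> 0 < L -> 0 < T -> 0 <= be <= K / 3 -> L * T ^+ 2 <= 1 / 4 ->
  K * T ^+ 2 <= 1 / 16 -> 0 <= m <= 2 -> 0 <= nz -> 0 <= y ->
  - K * nz ^+ 2 - ng ^+ 2 / L + C + nz * (be * (nz + M)) + (1 + m) * y * (ng + be * (nz + M))
  - 4 * y ^+ 2 / T ^+ 2 + 11 / 25 * K * (17 / 16 * nz ^+ 2 + (17 + m) * y ^+ 2)
    <= C + be ^+ 2 * M ^+ 2 * (7 * T ^+ 2 / 6 + 3 / (2 * K)).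
Proof.
move=> K0 L0 T0 /andP[be0 beK] LT KT /andP[m0 m2] nz0 y0.
pose u := y / T.
have u0 : 0 <= u by rewrite divr_ge0 // ltW.
have -> : y = T * u by rewrite /u mulrC divfK // gt_eqF.
have -> : 4 * (T * u) ^+ 2 / T ^+ 2 = 4 * u ^+ 2 by field; rewrite gt_eqF.
have gw_le : (1 + m) * (T * u) * ng <= ng ^+ 2 / L + 9 / 4 * L * (T * u) ^+ 2.
  have := mulr_young ((1 + m) * (T * u)) ng (L / 4) ltac:(lra).
  have : ((1 + m) * (T * u)) ^+ 2 <= 9 * (T * u) ^+ 2.
    by rewrite exprMn ler_wpM2r ?sqr_ge0 // (_ : 9 = 3 ^+ 2) ?ler_pXn2r ?nnegrE //; lra.
  rewrite (_ : 4 * (L / 4) = L); last by field.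
  nra.
have zM_le : nz * (be * M) <= K / 6 * nz ^+ 2 + 3 / (2 * K) * (be * M) ^+ 2.
  have := mulr_young nz (be * M) (K / 6) ltac:(lra).
  rewrite (_ : (be * M) ^+ 2 / (4 * (K / 6)) = 3 / (2 * K) * (be * M) ^+ 2) //.
  by field; rewrite gt_eqF.
have we_le := @cross_term_le _ m u (T * be * nz) (T * be * M) ltac:(lra) u0
  ltac:(by rewrite !mulr_ge0 // ltW).
have be_nz : be * nz ^+ 2 <= K / 3 * nz ^+ 2 by rewrite ler_wpM2r ?sqr_ge0.
have beT_nz : (T * be * nz) ^+ 2 <= K / 144 * nz ^+ 2.
  rewrite (_ : _ ^+ 2 = be ^+ 2 * T ^+ 2 * nz ^+ 2); last by ring.
  rewrite ler_wpM2r ?sqr_ge0 //.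
  have : be ^+ 2 <= (K / 3) ^+ 2 by rewrite ler_pXn2r ?nnegrE //; lra.
  nra.
have Tu2 : (T * u) ^+ 2 = T ^+ 2 * u ^+ 2 by rewrite exprMn.
have LT_u : L * (T * u) ^+ 2 <= u ^+ 2 / 4.
  by rewrite Tu2 mulrA mulrC (_ : _ / 4 = u ^+ 2 * (1 / 4)) ?ler_wpM2l ?sqr_ge0 //; lra.
have KT_u : K * (T * u) ^+ 2 <= u ^+ 2 / 16.
  by rewrite Tu2 mulrA mulrC (_ : _ / 16 = u ^+ 2 * (1 / 16)) ?ler_wpM2l ?sqr_ge0 //; lra.
have mKT_u : m * (K * (T * u) ^+ 2) <= 2 * (K * (T * u) ^+ 2).
  by rewrite ler_wpM2r // mulr_ge0 ?sqr_ge0 // ltW.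
have : 0 <= K * nz ^+ 2 by rewrite mulr_ge0 ?sqr_ge0 // ltW.
have := sqr_ge0 u.
lra.
Qed.

Lemma drift_estimate (K L T be eps s M C : R) (z w g e : vec) :
  0 < K -> 0 < L -> 0 < T -> 0 <= be <= K / 3 -> L * T ^+ 2 <= 1 / 4 ->
  K * T ^+ 2 <= 1 / 16 -> 0 <= s <= T -> 0 <= eps ->
  - vdot z g <= - K * vnorm z ^+ 2 - vnorm g ^+ 2 / L + C ->
  eps * vnorm e <= be * (vnorm z + M) ->
  drift (2 / T ^+ 2) s z w (force eps g e) + 11 / 25 * K * lyapunov (2 / T ^+ 2) s z w
    <= C + be ^+ 2 * M ^+ 2 * (7 * T ^+ 2 / 6 + 3 / (2 * K)).
Proof.
move=> K0 L0 T0 be_K LT KT /andP[s0 sT] eps0 hzg hne.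
have T2 : 0 < T ^+ 2 by rewrite exprn_gt0.
have m2 : 2 / T ^+ 2 * s ^+ 2 <= 2.
  by rewrite mulrAC ler_pdivrMr // ler_wpM2l // ler_pXn2r ?nnegrE //; lra.
have m0 : 0 <= 2 / T ^+ 2 * s ^+ 2 by rewrite mulr_ge0 ?sqr_ge0 // divr_ge0 // ltW.
have ka0 : 0 <= 11 / 25 * K by rewrite mulr_ge0 // ltW.
apply: le_trans (lerD (drift_force_le T w s0 eps0 hzg hne)
  (ler_wpM2l ka0 (lyapunov_le (2 / T ^+ 2) z w s0))) _.
apply: drift_scalar_le; rewrite ?m0 ?mulr_ge0 ?vnorm_ge0 //.
Qed.

End DriftEstimate.

Lemma contraction_le {R : realType} (K T A A0 B : R) : 0 < K -> 0 < T ->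
  K * T ^+ 2 <= 1 / 16 -> 0 <= A0 ->
  (1 + 11 / 25 * K * T ^+ 2) * A <= A0 + (1 + 11 / 25 * K * T ^+ 2) * B ->
  A <= (1 - 5 / 12 * K * T ^+ 2) * A0 + B.
Proof.
move=> K0 T0 KT A00 hA.
have x0 : 0 < K * T ^+ 2 by rewrite mulr_gt0 // exprn_gt0.
have E0 : 0 < 1 + 11 / 25 * K * T ^+ 2 by lra.
rewrite -(ler_pM2l E0).
have : 0 <= K * T ^+ 2 * (7 - 55 * (K * T ^+ 2)) * A0
  by apply: mulr_ge0 => //; apply: mulr_ge0; [exact: ltW | lra].
lra.
Qed.

Section VsubCalculus.
Context {R : realType} {d : nat}.
Notation vec := (d.-tuple R).

Lemma is_derive_tnth_vsub (X Y : R -> vec) (t dx dy : R) i :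
  is_derive t 1 (fun u => tnth (X u) i) dx ->
  is_derive t 1 (fun u => tnth (Y u) i) dy ->
  is_derive t 1 (fun u => tnth (vsub (X u) (Y u)) i) (dx - dy).
Proof.
move=> hX hY; rewrite (_ : (fun u => _) = (fun u => tnth (X u) i - tnth (Y u) i)).
  exact: is_deriveB.
by apply/funext => u; rewrite tnth_vsub.
Qed.

Lemma cvg_tnth_vsub (T : Type) (F : set_system T) (FF : Filter F) (X Y : T -> vec) (x y : vec) i :
  tnth (X u) i @[u --> F] --> tnth x i -> tnth (Y u) i @[u --> F] --> tnth y i ->
  tnth (vsub (X u) (Y u)) i @[u --> F] --> tnth (vsub x y) i.
Proof. by move=> hX hY; rewrite tnth_vsub; under eq_cvg do rewrite tnth_vsub; exact: cvgB. Qed.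

End VsubCalculus.

Section TwoSolutions.
Context {R : realType} {d : nat}.
Notation vec := (d.-tuple R).
Variables (gradV : vec -> vec) (G1 : vec -> vec -> vec) (eps : R).
Variables (nut nut' : R -> probability vec R) (x x' v : vec) (Q P Q' P' : R -> vec).
Hypothesis sol : solves_ham gradV G1 eps nut x v Q P.
Hypothesis sol' : solves_ham gradV G1 eps nut' x' v Q' P'.

Let Z t := vsub (Q t) (Q' t).
Let W t := vsub (P t) (P' t).
Let F t := force eps (vsub (gradV (Q t)) (gradV (Q' t)))
  (vsub (interaction G1 (nut t) (Q t)) (interaction G1 (nut' t) (Q' t))).

Lemma solves_ham_sub_derive (t : R) : 0 < t -> forall i,
  is_derive t 1 (fun u => tnth (Z u) i) (tnth (W t) i) /\
  is_derive t 1 (fun u => tnth (W u) i) (tnth (F t) i).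
Proof.
move=> t0 i; case: sol sol' => [_ [_ [_ [_ [_ d_sol]]]]] [_ [_ [_ [_ [_ d_sol']]]]].
have [dQ dP] := d_sol t t0 i; have [dQ' dP'] := d_sol' t t0 i.
split; first by rewrite tnth_vsub; exact: is_derive_tnth_vsub.
apply: is_derive_eq (is_derive_tnth_vsub dP dP') _.
by rewrite /F /force !tnth_vsub !tnth_vscale !tnth_vsub; ring.
Qed.

Lemma solves_ham_sub_cvg0 i :
  tnth (Z t) i @[t --> (0 : R)^'+] --> tnth (Z 0) i /\
  tnth (W t) i @[t --> (0 : R)^'+] --> tnth (W 0) i.
Proof.
case: sol sol' => [Q0 [P0 [cQ [cP _]]]] [Q0' [P0' [cQ' [cP' _]]]].
by rewrite /Z /W Q0 P0 Q0' P0'; split; exact: cvg_tnth_vsub.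
Qed.

Lemma solves_ham_lyapunov_le (T ka B : R) : 0 < T -> 0 <= ka -> 0 <= B ->
  (forall t, 0 < t < T -> drift (2 / T ^+ 2) (T - t) (Z t) (W t) (F t)
     + ka * lyapunov (2 / T ^+ 2) (T - t) (Z t) (W t) <= B) ->
  (1 + ka * T ^+ 2) * vnorm (Z T) ^+ 2
    <= vnorm (vsub x x') ^+ 2 + (1 + ka * T ^+ 2) * (B * T ^+ 2).
Proof.
move=> T0 ka0 B0 drift_le.
have W0 : W 0 = vzero by case: sol sol' => [_ [P0 _]] [_ [P0' _]]; rewrite /W P0 P0' vsubxx.
have Z0 : Z 0 = vsub x x' by case: sol sol' => [Q0 _] [Q0' _]; rewrite /Z Q0 Q0'.
rewrite -Z0 !vnorm_sqr.
apply: (@lyapunov_comparison R d T (2 / T ^+ 2) Z W F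
  (fun t t0 i => (solves_ham_sub_derive t0 i).1)
  (fun t t0 i => (solves_ham_sub_derive t0 i).2)
  (fun i => (solves_ham_sub_cvg0 i).1) (fun i => (solves_ham_sub_cvg0 i).2)) => //.
by rewrite divr_ge0 // ltW // exprn_gt0.
Qed.

Lemma solves_ham_gap_le (L K Rc Lt T M : R) :
  0 < L -> 0 < K -> 0 <= Rc -> 0 < T -> 0 <= eps -> 0 <= Lt -> 0 <= M ->
  (forall y y', vnorm (vsub (gradV y) (gradV y')) <= L * vnorm (vsub y y')) ->
  (forall y y', Rc <= vnorm (vsub y y') ->
     K * vnorm (vsub y y') ^+ 2 + L^-1 * vnorm (vsub (gradV y) (gradV y')) ^+ 2
       <= vdot (vsub y y') (vsub (gradV y) (gradV y'))) ->
  (L + 2 * eps * Lt) * T ^+ 2 <= 1 / 4 -> eps * Lt <= K / 3 ->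
  (forall t, 0 < t < T ->
     eps * vnorm (vsub (interaction G1 (nut t) (Q t)) (interaction G1 (nut' t) (Q' t)))
       <= eps * Lt * (vnorm (Z t) + M)) ->
  vnorm (Z T) ^+ 2 <= (1 - 5 / 12 * K * T ^+ 2) * vnorm (vsub x x') ^+ 2
    + eps ^+ 2 * Lt ^+ 2 * T ^+ 4 * (7 / 6 + 3 / (2 * K * T ^+ 2)) * M ^+ 2
    + (2 * L + K) * Rc ^+ 2 * T ^+ 2.
Proof.
move=> L0 K0 Rc0 T0 eps0 Lt0 M0 gradV_lip gradV_far hT hepsK interaction_le.
have T2 : 0 < T ^+ 2 by rewrite exprn_gt0.
have be0 : 0 <= eps * Lt by rewrite mulr_ge0.
pose B := (2 * L + K) * Rc ^+ 2 + (eps * Lt) ^+ 2 * M ^+ 2 * (7 * T ^+ 2 / 6 + 3 / (2 * K)).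
have B0 : 0 <= B.
  have : 0 <= (2 * L + K) * Rc ^+ 2 by rewrite mulr_ge0 ?sqr_ge0 //; lra.
  have : 0 <= (eps * Lt * M) ^+ 2 * T ^+ 2 by rewrite mulr_ge0 ?sqr_ge0.
  have : 0 <= (eps * Lt * M) ^+ 2 * (3 / (2 * K)).
    by rewrite mulr_ge0 ?sqr_ge0 // divr_ge0 //; lra.
  rewrite /B; lra.
rewrite -addrA (_ : eps ^+ 2 * _ * _ * _ * _ + _ = B * T ^+ 2); last first.
  by rewrite /B; field; rewrite ?gt_eqF.
have [d0|d_gt0] := posnP d.
  by rewrite !vnorm_dim0 // expr0n mulr0 add0r mulr_ge0 // ltW.
have LT : L * T ^+ 2 <= 1 / 4.
  by apply: le_trans hT; apply: ler_wpM2r; [exact: ltW | rewrite lerDl; lra].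
have KT : K * T ^+ 2 <= 1 / 16.
  have := K_le_quarter_L gradV_far L0 K0 Rc0 d_gt0.
  by move=> /(ler_wpM2r (ltW T2)); lra.
apply: (contraction_le K0 T0 KT (sqr_ge0 _)).
apply: solves_ham_lyapunov_le => //; first by rewrite mulr_ge0 // ltW.
move=> t /andP[t0 tT].
apply: (@drift_estimate _ _ K L T (eps * Lt) eps _ M ((2 * L + K) * Rc ^+ 2)) => //.
- by rewrite be0.
- by rewrite subr_ge0 ltW //= lerBlDr lerDl ltW.
- exact: gradV_dissipative.
- by apply: interaction_le; rewrite t0 tT.
Qed.

Lemma solves_ham_interaction_le (k : probability (vec * vec)%type R) (t Lt M : R) :
  0 <= t -> 0 <= Lt -> is_coupling k (nut t) (nut' t) ->
  (forall y z y' z', vnorm (vsub (G1 y z) (G1 y' z'))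
                       <= Lt * (vnorm (vsub y y') + vnorm (vsub z z'))) ->
  (\int[k]_p (vnorm (vsub p.1 p.2))%:E <= M%:E)%E ->
  vnorm (vsub (interaction G1 (nut t) (Q t)) (interaction G1 (nut' t) (Q' t)))
    <= Lt * (vnorm (Z t) + M).
Proof.
move=> t0 Lt0 cpl G1_lip costM.
case: sol sol' => [_ [_ [_ [_ [int _]]]]] [_ [_ [_ [_ [int' _]]]]].
exact: interaction_sub_le Lt0 cpl (int t t0) (int' t t0) G1_lip costM.
Qed.

Lemma solves_ham_interaction_le0 (k : probability (vec * vec)%type R) (t Lt : R) :
  0 <= t -> 0 <= eps -> eps * Lt = 0 -> is_coupling k (nut t) (nut' t) ->
  (forall y z y' z', vnorm (vsub (G1 y z) (G1 y' z'))
                       <= Lt * (vnorm (vsub y y') + vnorm (vsub z z'))) ->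
  eps * vnorm (vsub (interaction G1 (nut t) (Q t)) (interaction G1 (nut' t) (Q' t))) <= 0.
Proof.
move=> t0 eps0 be0 cpl G1_lip.
have [-> | eps_neq0] := eqVneq eps 0; first by rewrite mul0r.
have Lt0 : Lt = 0 by apply/eqP; move/eqP: be0; rewrite mulf_eq0 (negbTE eps_neq0).
rewrite pmulr_rle0 ?lt0r ?eps_neq0 //.
case: sol sol' => [_ [_ [_ [_ [int _]]]]] [_ [_ [_ [_ [int' _]]]]].
apply: interaction_sub_le0 cpl (int t t0) (int' t t0) _ => y z y' z'.
by rewrite -(mul0r (vnorm (vsub y y') + vnorm (vsub z z'))) -Lt0.
Qed.

End TwoSolutions.

Lemma lee_EFin_add_mul_sqr {R : realType} (a b c e : R) (M : \bar R) :
  (0 <= M)%E -> 0 < c -> (forall r, M = r%:E -> a <= b + c * r ^+ 2 + e) ->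
  (a%:E <= b%:E + c%:E * (M * M) + e%:E)%E.
Proof.
case: M => [r | | ] // _ c0 le_r; first by rewrite -!EFinM -!EFinD lee_fin -expr2 le_r.
by rewrite mulyy gt0_muley ?lte_fin // addey // addye // leey.
Qed.

Theorem mainTheorem7 (R : realType) (d : nat)
  (V : d.-tuple R -> R) (gradV : d.-tuple R -> d.-tuple R)
  (W : d.-tuple R -> d.-tuple R -> R) (G1 : d.-tuple R -> d.-tuple R -> d.-tuple R)
  (L K Rc Lt : R)
  (hL : 0 < L) (hK : 0 < K) (hRc : 0 <= Rc) (hLt : 0 <= Lt)
  (hgradV : is_gradient V gradV) (hG1 : is_gradient1 W G1)
  (ha0 : V vzero = 0) (ha1 : forall x, 0 <= V x)
  (hb : forall x y, vnorm (vsub (gradV x) (gradV y)) <= L * vnorm (vsub x y))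
  (hc : forall x y, Rc <= vnorm (vsub x y) ->
     K * vnorm (vsub x y) ^+ 2 + L^-1 * vnorm (vsub (gradV x) (gradV y)) ^+ 2
       <= vdot (vsub x y) (vsub (gradV x) (gradV y)))
  (hWsym : forall x y, W x y = W y x)
  (hd : forall x y x' y', vnorm (vsub (G1 x y) (G1 x' y'))
                            <= Lt * (vnorm (vsub x x') + vnorm (vsub y y')))
  (T eps : R) (hT : 0 < T) (heps : 0 <= eps)
  (hT2 : (L + 2 * eps * Lt) * T ^+ 2 <= 1 / 4) (hepsK : eps * Lt <= K / 3)
  (gamma : probability (d.-tuple R) R) (hgamma : std_gaussian gamma)
  (mu mu' : probability (d.-tuple R) R)
  (Qf Pf Qf' Pf' : d.-tuple R -> d.-tuple R -> R -> d.-tuple R)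
  (mut mut' : R -> probability (d.-tuple R) R)
  (hflow : dd_hamiltonian gradV G1 eps gamma mu Qf Pf mut)
  (hflow' : dd_hamiltonian gradV G1 eps gamma mu' Qf' Pf' mut')
  (x x' v v' : d.-tuple R) (hv : v = v')
  (kappa : R -> probability (d.-tuple R * d.-tuple R)%type R)
  (hkappa : forall s : R, 0 <= s <= T -> is_coupling (kappa s) (mut s) (mut' s)) :
  (((vnorm (vsub (Qf x v T) (Qf' x' v' T))) ^+ 2)%:E <=
    ((1 - 5 / 12 * K * T ^+ 2) * vnorm (vsub x x') ^+ 2)%:E
    + (eps ^+ 2 * Lt ^+ 2 * T ^+ 4 * (7 / 6 + 3 / (2 * K * T ^+ 2)))%:E
        * (sup_coupling_cost kappa T * sup_coupling_cost kappa T)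
    + ((2 * L + K) * Rc ^+ 2 * T ^+ 2)%:E)%E.
Proof.
case: hflow hflow' => [sol _] [sol' _]; subst v'.
have gap := solves_ham_gap_le (sol x v) (sol' x' v) hL hK hRc hT heps hLt.
have cpl t : 0 < t < T -> is_coupling (kappa t) (mut t) (mut' t).
  by case/andP=> t0 tT; apply: hkappa; rewrite !ltW.
(* When eps Lt = 0 the couplings, whose cost may be infinite, are not needed. *)
have [be0 | be_neq0] := eqVneq (eps * Lt) 0.
  rewrite -!exprMn be0 expr0n !mul0r mul0e adde0 -EFinD lee_fin.
  have := gap 0 (lexx 0) hb hc hT2 hepsK; rewrite expr0n !mulr0 addr0; apply.
  move=> t t_in; rewrite be0 mul0r.
  apply: (solves_ham_interaction_le0 (sol x v) (sol' x' v) _ heps be0 (cpl t t_in) hd).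
  by case/andP: t_in => /ltW.
have cost_le t : 0 <= t <= T ->
    (\int[kappa t]_p (vnorm (vsub p.1 p.2))%:E <= sup_coupling_cost kappa T)%E.
  by move=> t_in; apply: ereal_sup_ubound; exists t.
have sup_ge0 : (0 <= sup_coupling_cost kappa T)%E.
  apply: le_trans (cost_le 0 _); last by rewrite lexx ltW.
  by apply: integral_ge0 => p _; rewrite lee_fin vnorm_ge0.
apply: lee_EFin_add_mul_sqr => // [|M sup_M].
  have be_gt0 : 0 < eps * Lt by rewrite lt0r be_neq0 mulr_ge0.
  have T2 : 0 < T ^+ 2 by rewrite exprn_gt0.
  have : 0 < 3 / (2 * K * T ^+ 2) by apply: divr_gt0; [lra | nra].
  have : 0 < (eps * Lt) ^+ 2 * T ^+ 4 by rewrite mulr_gt0 ?exprn_gt0.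
  by rewrite exprMn; nra.
apply: gap => // [|t t_in]; first by rewrite -lee_fin -sup_M.
rewrite -mulrA ler_wpM2l //.
apply: (solves_ham_interaction_le (sol x v) (sol' x' v) _ hLt (cpl t t_in) hd).
  by case/andP: t_in => /ltW.
by rewrite -sup_M; apply: cost_le; case/andP: t_in => /ltW -> /ltW.
Qed.
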